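(* For all $A,B\in\mathbb{P}(n)$, if $A\preceq B$ then $A\preceq A*B\preceq B$.
   Context: $\mathbb{P}(n)$ denotes the cone of $n\times n$ positive definite Hermitian matrices and $\preceq$ is the Löwner order: $A\preceq B$ iff $B-A$ is positive semidefinite. For $A,B\in\mathbb{P}(n)$, with $\lambda_{\max},\lambda_{\min}$ the largest and smallest eigenvalues of $BA^{-1}$, define $A*B=\frac{1}{\sqrt{\lambda_{\min}}+\sqrt{\lambda_{\max}}}\left(B+\sqrt{\lambda_{\min}\lambda_{\max}}\,A\right)$. *)

From mathcomp Require Import all_boot all_order all_algebra.
Set Implicit Arguments. Unset Strict Implicit. Unset Printing Implicit Defensive.
Import Order.TTheory GRing.Theory Num.Theory.
Local Open Scope ring_scope.

Definition adjmx (C : numClosedFieldType) m p (M : 'M[C]_(m, p)) : 'M[C]_(p, m) :=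
  (map_mx Num.conj M)^T.

Definition hermmx (C : numClosedFieldType) n (A : 'M[C]_n) : Prop :=
  adjmx A = A.

Definition posdefmx (C : numClosedFieldType) n (A : 'M[C]_n) : Prop :=
  hermmx A /\ forall x : 'cV[C]_n, x != 0 -> 0 < (adjmx x *m A *m x) 0 0.

Definition psdmx (C : numClosedFieldType) n (A : 'M[C]_n) : Prop :=
  hermmx A /\ forall x : 'cV[C]_n, 0 <= (adjmx x *m A *m x) 0 0.

Definition loewner (C : numClosedFieldType) n (A B : 'M[C]_n) : Prop :=
  psdmx (B - A).

Definition is_max_eigenvalue (C : numClosedFieldType) n (M : 'M[C]_n) (l : C) : Prop :=
  eigenvalue M l /\ forall a, eigenvalue M a -> a <= l.
Definition is_min_eigenvalue (C : numClosedFieldType) n (M : 'M[C]_n) (l : C) : Prop :=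
  eigenvalue M l /\ forall a, eigenvalue M a -> l <= a.

(* A * B, given lmin = lambda_min(B A^{-1}) and lmax = lambda_max(B A^{-1}) *)
Definition star_mean (C : numClosedFieldType) n (lmin lmax : C) (A B : 'M[C]_n) : 'M[C]_n :=
  (sqrtC lmin + sqrtC lmax)^-1 *: (B + sqrtC (lmin * lmax) *: A).

From mathcomp Require Import all_boot all_order all_algebra.
From mathcomp Require Import sesquilinear spectral ring.
Set Implicit Arguments. Unset Strict Implicit. Unset Printing Implicit Defensive.
Import Order.TTheory GRing.Theory Num.Theory.
Local Open Scope ring_scope.

(* Factor A = R^* R with R invertible (spectral theorem).  The Hermitian
   matrix K = R^-* B R^-1 is similar to B A^-1, so its eigenvalues are at
   least lmin, whence x^* B x >= lmin x^* A x for every x.  Testing A <= B on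
   an eigenvector of B A^-1 for lmin gives lmin >= 1.  With a = sqrt lmin >= 1
   and b = sqrt lmax >= 0, the form of A * B is (x^* B x + a b x^* A x)/(a + b),
   and both inequalities reduce to x^* B x >= a^2 x^* A x. *)

Lemma star_mean_scalar_bounds (F : numFieldType) (a b p q : F) :
  1 <= a -> 0 <= b -> 0 <= p -> a ^+ 2 * p <= q ->
  p <= (a + b)^-1 * (q + a * b * p) <= q.
Proof.
move=> a_ge1 b_ge0 p_ge0 apq.
have ab_ge1 : 1 <= a + b := ler_wpDr b_ge0 a_ge1.
have ab_gt0 : 0 < a + b := lt_le_trans ltr01 ab_ge1.
have a1_ge0 : 0 <= a - 1 by rewrite subr_ge0.
have ab1_ge0 : 0 <= a + b - 1 by rewrite subr_ge0.
have qp_ge0 : 0 <= q - a ^+ 2 * p by rewrite subr_ge0.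
have ab_neq0 : a + b != 0 := lt0r_neq0 ab_gt0.
have ab_ge0 : 0 <= a + b := ltW ab_gt0.
have abV_ge0 : 0 <= (a + b)^-1 by rewrite invr_ge0.
rewrite -[p <= _]subr_ge0 -[_ <= q]subr_ge0; apply/andP; split.
  have -> : (a + b)^-1 * (q + a * b * p) - p =
            (a + b)^-1 * ((q - a ^+ 2 * p) + (a - 1) * (a + b) * p) by field.
  by apply: mulr_ge0 => //; apply: addr_ge0 => //; do 2 apply: mulr_ge0 => //.
have -> : q - (a + b)^-1 * (q + a * b * p) =
          (a + b)^-1 * ((a + b - 1) * (q - a ^+ 2 * p) + a * (a - 1) * (a + b) * p)
  by field.
apply: mulr_ge0 => //; apply: addr_ge0; first exact: mulr_ge0.
by do 3 apply: mulr_ge0 => //; apply: le_trans a_ge1.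
Qed.

Section Adjoint.
Variable C : numClosedFieldType.

Lemma adjmxE m p (M : 'M[C]_(m, p)) : adjmx M = map_mx Num.conj (M ^T).
Proof. by apply/matrixP => i j; rewrite !mxE. Qed.

Lemma adjmxK m p (M : 'M[C]_(m, p)) : adjmx (adjmx M) = M.
Proof. by apply/matrixP => i j; rewrite !mxE conjCK. Qed.

Lemma adjmxM m p q (M : 'M[C]_(m, p)) (N : 'M[C]_(p, q)) :
  adjmx (M *m N) = adjmx N *m adjmx M.
Proof.
apply/matrixP => i j; rewrite !mxE rmorph_sum; apply: eq_bigr => k _.
by rewrite !mxE rmorphM mulrC.
Qed.

Lemma adjmxD m p (M N : 'M[C]_(m, p)) : adjmx (M + N) = adjmx M + adjmx N.
Proof. by apply/matrixP => i j; rewrite !mxE rmorphD. Qed.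

Lemma adjmxN m p (M : 'M[C]_(m, p)) : adjmx (- M) = - adjmx M.
Proof. by apply/matrixP => i j; rewrite !mxE rmorphN. Qed.

Lemma adjmxZ m p c (M : 'M[C]_(m, p)) : adjmx (c *: M) = c^* *: adjmx M.
Proof. by apply/matrixP => i j; rewrite !mxE rmorphM. Qed.

Lemma adjmx1 n : adjmx (1%:M : 'M[C]_n) = 1%:M.
Proof. by rewrite adjmxE trmx1 map_mx1. Qed.

Lemma adjmx0 m p : adjmx (0 : 'M[C]_(m, p)) = 0.
Proof. by rewrite adjmxE trmx0 map_mx0. Qed.

Lemma adjmx_eq0 m p (M : 'M[C]_(m, p)) : (adjmx M == 0) = (M == 0).
Proof.
by apply/eqP/eqP => [M0|->]; rewrite ?adjmx0 // -[M]adjmxK M0 adjmx0.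
Qed.

Lemma adjmx_unitmx n (M : 'M[C]_n) : M \in unitmx -> adjmx M \in unitmx.
Proof.
move=> Mu; have : adjmx (invmx M) *m adjmx M = 1%:M.
  by rewrite -adjmxM mulmxV // adjmx1.
by case/mulmx1_unit.
Qed.

Lemma invmx_adjmx n (M : 'M[C]_n) :
  M \in unitmx -> invmx (adjmx M) = adjmx (invmx M).
Proof.
move=> Mu; apply: (@row_full_inj _ _ _ _ (adjmx M)).
  by rewrite row_full_unit adjmx_unitmx.
by rewrite mulmxV ?adjmx_unitmx // -adjmxM mulVmx // adjmx1.
Qed.

Lemma unitarymx_mul_adj m p (M : 'M[C]_(m, p)) :
  M \is unitarymx -> M *m adjmx M = 1%:M.
Proof. by move/unitarymxP; rewrite adjmxE. Qed.

Lemma unitarymx_adj_mul n (M : 'M[C]_n) :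
  M \is unitarymx -> adjmx M *m M = 1%:M.
Proof.
move=> Mu; rewrite adjmxE -invmx_unitary //.
by rewrite mulVmx // unitarymx_unit.
Qed.

End Adjoint.

Section HermitianForms.
Variable C : numClosedFieldType.

Lemma hermmx_hermsymmx n (A : 'M[C]_n) : hermmx A -> A \is hermsymmx.
Proof. by rewrite is_hermitianmxE expr0 scale1r -adjmxE => ->. Qed.

Lemma hermmxD n (A B : 'M[C]_n) : hermmx A -> hermmx B -> hermmx (A + B).
Proof. by rewrite /hermmx adjmxD => -> ->. Qed.

Lemma hermmxN n (A : 'M[C]_n) : hermmx A -> hermmx (- A).
Proof. by rewrite /hermmx adjmxN => ->. Qed.

Lemma hermmxZ n c (A : 'M[C]_n) : c \is Num.real -> hermmx A -> hermmx (c *: A).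
Proof. by rewrite /hermmx adjmxZ => /conj_Creal -> ->. Qed.

Definition qform n (x : 'cV[C]_n) (M : 'M[C]_n) : C := (adjmx x *m M *m x) 0 0.

Lemma qformD n (x : 'cV[C]_n) M N : qform x (M + N) = qform x M + qform x N.
Proof. by rewrite /qform mulmxDr mulmxDl mxE. Qed.

Lemma qformN n (x : 'cV[C]_n) M : qform x (- M) = - qform x M.
Proof. by rewrite /qform mulmxN mulNmx mxE. Qed.

Lemma qformZ n (x : 'cV[C]_n) c M : qform x (c *: M) = c * qform x M.
Proof. by rewrite /qform -scalemxAr -scalemxAl mxE. Qed.

Lemma qform_mulmx n (R M : 'M[C]_n) x :
  qform (R *m x) M = qform x (adjmx R *m M *m R).
Proof. by rewrite /qform adjmxM !mulmxA. Qed.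

Lemma qform_diag n (x : 'cV[C]_n) (d : 'rV[C]_n) :
  qform x (diag_mx d) = \sum_j d 0 j * `|x j 0| ^+ 2.
Proof.
rewrite /qform mxE; apply: eq_bigr => j _.
by rewrite mul_mx_diag !mxE normCKC mulrCA mulrA.
Qed.

Lemma qform_adjmx n (v : 'rV[C]_n) M :
  qform (adjmx v) M = (v *m M *m adjmx v) 0 0.
Proof. by rewrite /qform adjmxK. Qed.

(* Eigenvectors in mxalgebra are row vectors, hence enter the form as [adjmx v]. *)
Lemma qform_adjmx_eigen n (A B : 'M[C]_n) v a :
  v *m B = a *: (v *m A) -> qform (adjmx v) B = a * qform (adjmx v) A.
Proof. by move=> vB; rewrite !qform_adjmx vB -scalemxAl mxE. Qed.

Lemma qform1_gt0 n (x : 'cV[C]_n) : x != 0 -> 0 < qform x 1%:M.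
Proof.
rewrite -adjmx_eq0 => /dotmx_is_dotmx.
by rewrite dotmxE -adjmxE adjmxK /qform mulmx1.
Qed.

Lemma row_unitmx_neq0 n (M : 'M[C]_n) i : M \in unitmx -> row i M != 0.
Proof.
move=> Mu; rewrite rowE mulmx_free_eq0 ?row_free_unit //.
by apply/eqP => /matrixP /(_ 0 i) /eqP; rewrite !mxE !eqxx oner_eq0.
Qed.

Lemma posdefmx_qform_ge0 n (A : 'M[C]_n) x : posdefmx A -> 0 <= qform x A.
Proof.
case=> _ pA; have [->|/pA /ltW //] := eqVneq x 0.
by rewrite /qform mulmx0 mxE.
Qed.

Lemma posdefmx_unit n (A : 'M[C]_n) : posdefmx A -> A \in unitmx.
Proof.
case=> _ pA; rewrite unitmxE unitfE; apply/det0P => -[v v0 vA].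
have := pA (adjmx v); rewrite adjmx_eq0 v0 adjmxK vA mul0mx mxE => /(_ isT).
by rewrite ltxx.
Qed.

Lemma posdefmx_eigenvalue_gt0 n (A : 'M[C]_n) a : posdefmx A -> eigenvalue A a -> 0 < a.
Proof.
move=> [_ pA] /eigenvalueP [v vA v0]; rewrite -adjmx_eq0 in v0.
have : 0 < qform (adjmx v) A := pA _ v0.
by rewrite (qform_adjmx_eigen (A := 1%:M) (a := a)) ?mulmx1 // pmulr_lgt0 // qform1_gt0.
Qed.

Lemma loewner_eigenvalue_ge1 n (A B : 'M[C]_n) a :
  posdefmx A -> loewner A B -> eigenvalue (B *m invmx A) a -> 1 <= a.
Proof.
move=> pA [_ psdBA] /eigenvalueP [v vE v0].
have vB : v *m B = a *: (v *m A).
  by rewrite -(mulmxKV (posdefmx_unit pA) B) mulmxA vE -scalemxAl.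
have qA_gt0 : 0 < qform (adjmx v) A by apply: pA.2; rewrite adjmx_eq0.
have : 0 <= qform (adjmx v) (B - A) := psdBA (adjmx v).
by rewrite qformD qformN subr_ge0 (qform_adjmx_eigen vB) ler_pMl.
Qed.

Lemma normalmx_spectral n (A : 'M[C]_n) : A \is normalmx ->
  A = adjmx (spectralmx A) *m diag_mx (spectral_diag A) *m spectralmx A.
Proof.
by move/orthomx_spectralP; rewrite invmx_unitary ?spectral_unitarymx // -adjmxE.
Qed.

Lemma spectralmx_mul n (A : 'M[C]_n) : A \is normalmx ->
  spectralmx A *m A = diag_mx (spectral_diag A) *m spectralmx A.
Proof.
move=> /normalmx_spectral {2}->.
by rewrite !mulmxA unitarymx_mul_adj ?spectral_unitarymx // mul1mx.
Qed.

Lemma spectral_diag_eigenvalue n (A : 'M[C]_n) i :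
  A \is normalmx -> eigenvalue A (spectral_diag A 0 i).
Proof.
move=> An; apply/eigenvalueP; exists (row i (spectralmx A)).
  by rewrite -row_mul spectralmx_mul // mul_diag_mx; apply/rowP => j; rewrite !mxE.
exact/row_unitmx_neq0/spectral_unit.
Qed.

Lemma hermmx_qform_lbound n (K : 'M[C]_n) mu x :
  hermmx K -> (forall a, eigenvalue K a -> mu <= a) -> mu * qform x 1%:M <= qform x K.
Proof.
move=> /hermmx_hermsymmx /hermitian_normalmx Kn lb.
set P := spectralmx K; set k := spectral_diag K.
have KE : K = adjmx P *m diag_mx k *m P := normalmx_spectral Kn.
have -> : qform x 1%:M = qform (P *m x) 1%:M.
  by rewrite qform_mulmx mulmx1 unitarymx_adj_mul ?spectral_unitarymx.
rewrite KE -qform_mulmx -diag_const_mx !qform_diag mulr_sumr; apply: ler_sum => j _.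
rewrite mxE mul1r ler_wpM2r ?exprn_ge0 //.
exact/lb/spectral_diag_eigenvalue.
Qed.

Lemma posdefmx_factor n (A : 'M[C]_n) :
  posdefmx A -> exists2 R, R \in unitmx & A = adjmx R *m R.
Proof.
move=> pA; have An := hermitian_normalmx (hermmx_hermsymmx pA.1).
set P := spectralmx A; set k := spectral_diag A.
have k_gt0 i : 0 < k 0 i := posdefmx_eigenvalue_gt0 pA (spectral_diag_eigenvalue i An).
pose D := diag_mx (\row_i sqrtC (k 0 i)).
have DD : adjmx D *m D = diag_mx k.
  rewrite adjmxE tr_diag_mx map_diag_mx mulmx_diag; congr diag_mx.
  by apply/rowP => i; rewrite !mxE /= conj_Creal ?sqrtC_real ?ltW // -expr2 sqrtCK.
exists (D *m P).
  rewrite unitmx_mul spectral_unit andbT unitmxE det_diag unitfE.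
  by apply/prodf_neq0 => i _; rewrite mxE sqrtC_eq0 lt0r_neq0.
by rewrite adjmxM mulmxA -(mulmxA _ (adjmx D)) DD -normalmx_spectral.
Qed.

Lemma invmx_mul n (M N : 'M[C]_n) : M \in unitmx -> N \in unitmx ->
  invmx (M *m N) = invmx N *m invmx M.
Proof.
move=> Mu Nu; apply: (@row_full_inj _ _ _ _ (M *m N)).
  by rewrite row_full_unit unitmx_mul Mu.
by rewrite mulmxV ?unitmx_mul ?Mu // mulmxA -(mulmxA M) mulmxV // mulmx1 mulmxV.
Qed.

Lemma posdefmx_qform_lbound n (A B : 'M[C]_n) mu x :
  posdefmx A -> hermmx B -> (forall a, eigenvalue (B *m invmx A) a -> mu <= a) ->
  mu * qform x A <= qform x B.
Proof.
move=> pA hB lb; have [R Ru AE] := posdefmx_factor pA.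
set S := invmx R; have Su : S \in unitmx by rewrite unitmx_inv.
set K := adjmx S *m B *m S.
have BE : B = adjmx R *m K *m R.
  by rewrite !mulmxA -adjmxM mulVmx // adjmx1 mul1mx -mulmxA mulVmx // mulmx1.
have KE : K = adjmx S *m (B *m invmx A) *m invmx (adjmx S).
  rewrite AE invmx_mul ?adjmx_unitmx // invmx_adjmx // !mulmxA.
  by rewrite -(mulmxA _ (adjmx S)) mulmxV ?adjmx_unitmx // mulmx1.
have -> : qform x A = qform (R *m x) 1%:M by rewrite qform_mulmx mulmx1 AE.
rewrite BE -qform_mulmx; apply: hermmx_qform_lbound.
  by rewrite /hermmx /K !adjmxM adjmxK hB mulmxA.
move=> a; rewrite KE -conjumx ?adjmx_unitmx // => /eigenvalue_conjmx ev.
by apply/lb/ev; rewrite ?stablemx_unit ?row_free_unit ?adjmx_unitmx.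
Qed.

Lemma loewner_qform n (A B : 'M[C]_n) :
  hermmx A -> hermmx B -> (forall x, qform x A <= qform x B) -> loewner A B.
Proof.
move=> hA hB AB; split; first exact: hermmxD hB (hermmxN hA).
by move=> x; have := AB x; rewrite -subr_ge0 -qformN -qformD.
Qed.

Lemma hermmx_star_mean n (A B : 'M[C]_n) lmin lmax : 0 <= lmin -> 0 <= lmax ->
  hermmx A -> hermmx B -> hermmx (star_mean lmin lmax A B).
Proof.
move=> lmin_ge0 lmax_ge0 hA hB; apply: hermmxZ; last first.
  by apply: hermmxD => //; apply: hermmxZ; rewrite ?ger0_real ?sqrtC_ge0 ?mulr_ge0.
by rewrite realV ger0_real // addr_ge0 // sqrtC_ge0.
Qed.

Lemma qform_star_mean n (A B : 'M[C]_n) lmin lmax x :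
  qform x (star_mean lmin lmax A B) =
  (sqrtC lmin + sqrtC lmax)^-1 * (qform x B + sqrtC (lmin * lmax) * qform x A).
Proof. by rewrite /star_mean qformZ qformD qformZ. Qed.

End HermitianForms.

Theorem proposition3 (C : numClosedFieldType) (n : nat) (A B : 'M[C]_n)
    (lmin lmax : C) :
  posdefmx A -> posdefmx B -> loewner A B ->
  is_min_eigenvalue (B *m invmx A) lmin ->
  is_max_eigenvalue (B *m invmx A) lmax ->
  loewner A (star_mean lmin lmax A B) /\ loewner (star_mean lmin lmax A B) B.
Proof.
move=> pA pB AB [evmin lmin_min] [evmax _]; have [hA hB] := (pA.1, pB.1).
have lmin_ge1 : 1 <= lmin := loewner_eigenvalue_ge1 pA AB evmin.
have lmin_ge0 : 0 <= lmin := le_trans ler01 lmin_ge1.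
have lmax_ge0 : 0 <= lmax := le_trans lmin_ge0 (lmin_min _ evmax).
have hS := hermmx_star_mean lmin_ge0 lmax_ge0 hA hB.
have bounds x : qform x A <= qform x (star_mean lmin lmax A B) <= qform x B.
  rewrite qform_star_mean sqrtCM ?nnegrE //; apply: star_mean_scalar_bounds.
  - by rewrite -sqrtC1 ler_sqrtC ?nnegrE.
  - by rewrite sqrtC_ge0.
  - exact: posdefmx_qform_ge0.
  - by rewrite sqrtCK; apply: posdefmx_qform_lbound pA hB lmin_min.
by split; apply: loewner_qform => // x; case/andP: (bounds x).
Qed.
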